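(* Let $k\ge1$, and let $\mathcal P=\{p_1,\dots,p_{k^2}\}$ be a family of real polynomials in the commuting variables $x_1,\dots,x_{2k^2}$ admitting an nc representation $p(X,Y)$ of degree $d>1$. Let $t\ge2$ and suppose $$p(X,Y)=d_1X^t+d_2X^{t-1}Y+d_3YX^{t-1}+q(X,Y),$$ where $q$ contains no scalar multiples of $X^t,X^{t-1}Y,YX^{t-1}$, and $d_1,d_2,d_3$ are pairwise distinct. If $x_u$ is a diagonal entry of $X$, then the family contains (counting over all polynomials) exactly: $2k-2$ terms $d_1x_u^{t-1}x_v$ with $x_v\ne x_u$ if $d_1\ne0$; $k-1$ terms $d_2x_u^{t-1}x_v$ with $x_v$ an off-diagonal entry of $Y$ if $d_2\ne0$; $k-1$ terms $d_3x_u^{t-1}x_v$ with $x_v$ an off-diagonal entry of $Y$ if $d_3\ne0$; and $1$ term $\varphi(t-1,1)x_u^{t-1}x_v$ with $x_v$ a diagonal entry of $Y$ if $\varphi(t-1,1)\ne0$. These account for all two letter terms of degree $t$ in which $x_u$ has degree $t-1$, and no two terms in this list are the same. Moreover, if $x_u$ is in position $(a,a)$ of $X$ and $p_{ab}$ denotes the polynomial in position $(a,b)$ of the array $p(X,Y)$, then for $b\ne a$, $$p_{ab}=d_1x_u^{t-1}x_v+d_2x_u^{t-1}x_w+\cdots,$$ where $x_v$ (resp. $x_w$) is the $(a,b)$ entry of $X$ (resp. $Y$) and $p_{ab}$ contains no other two letter monomials of degree $t$ having $x_u^{t-1}$ as a factor; and similarly $$p_{ba}=d_1x_u^{t-1}x_m+d_3x_u^{t-1}x_n+\cdots,$$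 where $x_m$ (resp. $x_n$) is the $(b,a)$ entry of $X$ (resp. $Y$) and $p_{ba}$ contains no other two letter monomials of degree $t$ having $x_u^{t-1}$ as a factor.
   Context: The family $\mathcal P$ admits an nc representation $p(X,Y)$ if there are $k\times k$ matrices $X,Y$ whose $2k^2$ entries are the variables $x_1,\dots,x_{2k^2}$, each used exactly once, and a noncommutative polynomial $p$ in two letters with real coefficients such that the matrix $p(X,Y)$ is a $k\times k$ array whose entries are $p_1,\dots,p_{k^2}$, each exactly once. A ''term'' means a monomial with its nonzero coefficient after collecting like terms. $\varphi(i,j)$ is the sum of coefficients of all monomials of $p$ of degree $i$ in $X$ and $j$ in $Y$. *)

From HB Require Import structures.
From mathcomp Require Import all_boot all_order all_algebra.
From mathcomp Require Import mpoly.
Set Implicit Arguments. Unset Strict Implicit. Unset Printing Implicit Defensive.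
Import Order.TTheory GRing.Theory Num.Theory.
Local Open Scope ring_scope.

(* A noncommutative polynomial in two letters X, Y is a coefficient function
   on words; a word is a [seq bool] with [true] = X and [false] = Y, read
   left to right.  Finite support is imposed in the theorem (via its degree). *)
Definition ncpoly (R : Type) := seq bool -> R.

(* Placement of the variables x_0 .. x_{2k^2-1} in the matrices:
   [pos (true, i, j)] is the index of the variable in entry (i,j) of X,
   [pos (false, i, j)] the one in entry (i,j) of Y. *)
Section Eval.
Variables (R : realFieldType) (k : nat).
Local Notation n := (2 * k ^ 2)%N.
Variable pos : bool * 'I_k * 'I_k -> 'I_n.

Definition varmx (b : bool) : 'M[{mpoly R[n]}]_k :=
  \matrix_(i, j) 'X_(pos (b, i, j)).

Definition mxword (w : seq bool) : 'M[{mpoly R[n]}]_k :=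
  foldr (fun b M => varmx b *m M) 1%:M w.

Definition ncentry (p : ncpoly R) (d : nat) (i j : 'I_k) : {mpoly R[n]} :=
  \sum_(m < d.+1) \sum_(w : m.-tuple bool) p w *: mxword w i j.

Definition coef2 (P : {mpoly R[n]}) (u : 'I_n) (e : nat) (v : 'I_n) : R :=
  mcoeff (mnm_add (mnm_muln (mnm1 u) e) (mnm1 v)) P.

Definition isXentry (v : 'I_n) : bool := [exists i, exists j, pos (true, i, j) == v].
Definition isYoffdiag (v : 'I_n) : bool :=
  [exists i, exists j, (i != j) && (pos (false, i, j) == v)].
Definition isYdiag (v : 'I_n) : bool := [exists i, pos (false, i, i) == v].
End Eval.

Definition phi (R : realFieldType) (p : ncpoly R) (i j : nat) : R :=
  \sum_(w : (i + j).-tuple bool | count id w == i) p w.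

Definition ncdeg (R : realFieldType) (p : ncpoly R) (d : nat) : Prop :=
  (forall w : seq bool, (d < size w)%N -> p w = 0) /\
  (exists w : seq bool, size w = d /\ p w != 0).

From HB Require Import structures.
From mathcomp Require Import all_boot all_order all_algebra.
From mathcomp Require Import mpoly.
Import Order.TTheory GRing.Theory Num.Theory.
Set Implicit Arguments. Unset Strict Implicit. Unset Printing Implicit Defensive.
Local Open Scope ring_scope.

(* Let [u] be the entry [(a, a)] of [X].  A monomial [x_u^(t-1) x_v] of an entry of [p(X, Y)]
   can only come from a word of length [t] with at most one letter [Y], and in the product
   along such a word every letter but one has to contribute the entry [x_u], so that the
   index path stays at [a] except around that letter.  For [X^t] the remaining factor is
   the first or the last one, i.e. [x_v] lies in column [a] or in row [a] of [X]; for
   [X^(t-1) Y] and [Y X^(t-1)] the [Y]-factor lies in row [a], resp. column [a]; a middle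
   letter [Y] forces [x_v = Y_aa], which collects [phi(t-1, 1)].  This gives the coefficient
   of [x_u^(t-1) x_v] in every entry explicitly ([coef_profile]); the counts and the shapes
   of [p_ab] and [p_ba] are read off from it, the distinctness of [d1, d2, d3] keeping the
   kinds of terms apart. *)

Lemma sum_indicator (R : ringType) (I : finType) (c : bool) (i0 : I) (F : I -> R) :
  \sum_i ((c && (i == i0))%:R * F i) = c%:R * F i0.
Proof.
rewrite (bigD1 i0) //= big1 ?addr0 ?eqxx ?andbT // => i /negbTE ->.
by rewrite andbF mul0r.
Qed.

Lemma sum_tuple_indicator (R : ringType) (T : finType) t (s : seq T)
    (size_s : size s == t) (c : bool) (F : seq T -> R) :
  \sum_(w : t.-tuple T) F w * ((w == s :> seq T) && c)%:R = c%:R * F s.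
Proof.
rewrite (bigD1 (Tuple size_s)) //= big1 ?addr0; first by rewrite eqxx mulr_natr mulr_natl.
move=> w ne_ws; rewrite (_ : (val w == s) = false) ?mulr0 //.
by apply/negbTE; apply: contra ne_ws => /eqP e; apply/eqP/val_inj.
Qed.

Section MonomialCoefficients.
Variables (R : comRingType) (N : nat).
Implicit Types (P : {mpoly R[N]}) (m : 'X_{1..N}) (x u : 'I_N).

Lemma mcoeff_mulX_addm x P m : ('X_x * P)@_(U_(x) + m)%MM = P@_m.
Proof. by rewrite mulrC mcoeffMX. Qed.

Lemma mcoeff_mulX_eq0 x P m : m x = 0%N -> ('X_x * P)@_m = 0.
Proof.
move=> mx0; rewrite mcoeffM; apply: big1 => -[m1 m2] /eqP /= e.
rewrite mcoeffX; case: eqP => [e1|]; last by rewrite mul0r.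
have := congr1 (fun m' : 'X_{1..N} => m' x) e.
by rewrite mx0 mnmDE -e1 mnm1E eqxx.
Qed.

Lemma mcoeff_mulX_mulm1n_eq0 u x P n :
  (u != x) || (n == 0%N) -> ('X_x * P)@_(U_(u) *+ n)%MM = 0.
Proof.
move=> h; apply: mcoeff_mulX_eq0; rewrite mulmnE mnm1E.
by case/orP: h => [/negbTE -> | /eqP ->]; rewrite ?muln0.
Qed.

Lemma mcoeff_natb (b : bool) m : ((b%:R : {mpoly R[N]})@_m) = (b && (m == 0%MM))%:R.
Proof. by case: b; rewrite /= ?mcoeff1 ?mcoeff0. Qed.

Lemma mulm1n_eq0 u n : (U_(u) *+ n == 0)%MM = (n == 0%N).
Proof.
apply/eqP/eqP => [e|->]; last by rewrite mulm0n.
by have := congr1 (fun m : 'X_{1..N} => m u) e; rewrite /= mulmnE mnm1E eqxx mul1n mnmE.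
Qed.

End MonomialCoefficients.

Lemma eq_nseq_true (w : seq bool) : (w == nseq (size w) true) = all id w.
Proof. by elim: w => //= b w IH; rewrite eqseq_cons IH; case: b. Qed.

Definition xword_at (t l : nat) (L : bool) : seq bool := set_nth true (nseq t true) l L.

Lemma size_xword_at t l L : (l < t)%N -> size (xword_at t l L) = t.
Proof. by move=> lt_lt; rewrite size_set_nth size_nseq; apply/maxn_idPr. Qed.

Lemma xword_at_last t L : xword_at t.+1 t L = rcons (nseq t true) L.
Proof. by elim: t => //= t <-. Qed.

Lemma exactly_one_Y (R : ringType) (w : seq bool) :
  ((count id w).+1 == size w)%:R =
    \sum_(l < size w) (w == xword_at (size w) l false)%:R :> R.
Proof.
elim: w => [|b w IH]; first by rewrite big_ord0.
rewrite big_ord_recl /=.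
under eq_bigr do rewrite /xword_at /= eqseq_cons.
case: b => /=; first by rewrite add0r -IH.
by rewrite big1 ?addr0 // /xword_at /= eqseq_cons eq_nseq_true add0n eqSS -all_count.
Qed.

Lemma sum_xword_at_Y (R : realFieldType) (p : ncpoly R) t : (0 < t)%N ->
  \sum_(l < t) p (xword_at t l false) = phi p t.-1 1.
Proof.
case: t => // t _; rewrite /phi /= addn1 [RHS]big_mkcond /=.
have one_Y (w : t.+1.-tuple bool) : (if count id w == t then p w else 0) =
    \sum_(l < t.+1) p w * ((w == xword_at t.+1 l false :> seq bool) && true)%:R.
  under eq_bigr do rewrite andbT.
  rewrite -big_distrr; have := exactly_one_Y R w; rewrite size_tuple => <-.
  rewrite eqSS.
  by case: (count id w == t); rewrite /= ?mulr1 ?mulr0.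
rewrite (eq_bigr _ (fun w _ => one_Y w)) exchange_big; apply: eq_bigr => l _.
by rewrite (@sum_tuple_indicator _ _ _ (xword_at t.+1 l false)) ?size_xword_at // mul1r.
Qed.

(* The coefficient of [x_u^(t-1) x_(pos (L, r, s))] in the entry [(i, j)] of [p(X, Y)],
   where [u] is the entry [(a, a)] of [X], [d1 = p(X^t)], [d2 = p(X^(t-1) Y)],
   [d3 = p(Y X^(t-1))] and [ph = phi p (t-1) 1]. *)
Definition coef_profile (R : ringType) k (a : 'I_k) (d1 d2 d3 ph : R)
    (i j : 'I_k) (L : bool) (r s : 'I_k) : R :=
  if (r == a) && (s == a) then ((i == a) && (j == a) && ~~ L)%:R * ph
  else [&& i == r, s == a & j == a]%:R * (if L then d1 else d3)
     + [&& i == a, r == a & j == s]%:R * (if L then d1 else d2).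

Section MatrixWords.
Variables (R : realFieldType) (k : nat) (pos : bool * 'I_k * 'I_k -> 'I_(2 * k ^ 2)).
Hypothesis posI : injective pos.
Variable a : 'I_k.
Local Notation u := (pos (true, a, a)).
Local Notation mxw := (mxword R pos).

Lemma mxword_nil i j : mxw [::] i j = (i == j)%:R.
Proof. by rewrite /= mxE. Qed.

Lemma mxword_cons b w i j :
  mxw (b :: w) i j = \sum_l 'X_(pos (b, i, l)) * mxw w l j.
Proof. by rewrite /= mxE; apply: eq_bigr => l _; rewrite /varmx mxE. Qed.

Lemma mcoeff_mxword_Xpow w i j n :
  (mxw w i j)@_(U_(u) *+ n)%MM =
  [&& n == size w, all id w, i == j & (w == [::]) || (i == a)]%:R.
Proof.
elim: w i j n => [|b w IH] i j n.
  by rewrite mxword_nil mcoeff_natb mulm1n_eq0 /= andbT andbC.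
rewrite mxword_cons raddf_sum (bigD1 a) //= big1 ?addr0; last first.
  move=> l ne_la; apply: mcoeff_mulX_mulm1n_eq0; rewrite (inj_eq posI) !xpair_eqE.
  by rewrite [a == l]eq_sym (negbTE ne_la) !andbF.
case: n => [|n]; first by rewrite mcoeff_mulX_mulm1n_eq0 ?orbT.
case: (eqVneq i a) => [->|ne_ia]; last first.
  rewrite mcoeff_mulX_mulm1n_eq0 ?andbF // (inj_eq posI) !xpair_eqE.
  by rewrite [a == i]eq_sym (negbTE ne_ia) andbF.
case: b; last by rewrite mcoeff_mulX_mulm1n_eq0 ?andbF // (inj_eq posI) !xpair_eqE.
by rewrite mulmS mcoeff_mulX_addm IH /= eqSS eqxx orbT !andbT.
Qed.

(* The index path [i = i_0, ..., i_t = j] of a nonzero monomial [x_u^(t-1) x_(pos (L, r, s))]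
   in [mxw (xword_at t l L) i j] must run through [a] at every [X] letter and
   through [(r, s)] at the letter [l]. *)
Definition walk_through (r s : 'I_k) (l t : nat) (i j : 'I_k) : bool :=
  (if l == 0%N then i == r else (i == a) && (r == a)) &&
  (if l == t.-1 then j == s else (s == a) && (j == a)).

Lemma walk_throughS r s l t i j : (l < t)%N ->
  walk_through r s l.+1 t.+1 i j = (i == a) && walk_through r s l t a j.
Proof.
case: t => // t _; rewrite /walk_through /= eqSS.
by case: (l == 0)%N; rewrite ?eqxx //= ?andbA // [r == a]eq_sym.
Qed.

Section OneOtherVariable.
Variables (L : bool) (r s : 'I_k).
Local Notation v := (pos (L, r, s)).
Hypothesis v_neq_u : v != u.

Lemma mcoeff_mulX_Xpow_var b i l (P : {mpoly R[2 * k ^ 2]}) n :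
  ('X_(pos (b, i, l)) * P)@_(U_(u) *+ n + U_(v))%MM =
    (b && (i == a) && (l == a))%:R *
      (if n is n'.+1 then P@_(U_(u) *+ n' + U_(v))%MM else 0)
  + ((b == L) && (i == r) && (l == s))%:R * P@_(U_(u) *+ n)%MM.
Proof.
have uv_F : (u == v) = false by rewrite eq_sym (negbTE v_neq_u).
have ->: b && (i == a) && (l == a) = (pos (b, i, l) == u).
  by rewrite (inj_eq posI) !xpair_eqE; case: b.
have ->: (b == L) && (i == r) && (l == s) = (pos (b, i, l) == v).
  by rewrite (inj_eq posI) !xpair_eqE.
case: (eqVneq (pos (b, i, l)) u) => [->|ne_u].
  rewrite uv_F mul1r mul0r addr0; case: n => [|n].
    by apply: mcoeff_mulX_eq0; rewrite mnmDE mulmnE mnm1E eqxx muln0 mnm1E eq_sym uv_F.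
  by rewrite mulmS -addmA mcoeff_mulX_addm.
case: (eqVneq (pos (b, i, l)) v) => [->|ne_v].
  by rewrite mul0r mul1r add0r addmC mcoeff_mulX_addm.
rewrite !mul0r addr0; apply: mcoeff_mulX_eq0.
by rewrite mnmDE mulmnE !mnm1E eq_sym (negbTE ne_u) [v == _]eq_sym (negbTE ne_v).
Qed.

Lemma mcoeff_mxword_Xpow_var w i j n :
  (mxw w i j)@_(U_(u) *+ n + U_(v))%MM =
  \sum_(l < size w)
    [&& size w == n.+1, w == xword_at (size w) l L
      & walk_through r s l (size w) i j]%:R.
Proof.
have uv_F : (u == v) = false by rewrite eq_sym (negbTE v_neq_u).
elim: w i j n => [|b w IH] i j n.
  rewrite mxword_nil mcoeff_natb big_ord0.
  case: (boolP (_ == 0%MM)) => [/eqP e|]; last by rewrite andbF.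
  have := congr1 (fun m : 'X_{1..(2 * k ^ 2)} => m v) e.
  by rewrite /= mnmDE mulmnE !mnm1E eqxx uv_F addn1 mnmE.
rewrite mxword_cons raddf_sum.
rewrite (eq_bigr _ (fun l _ => mcoeff_mulX_Xpow_var b i l _ n)).
rewrite big_split /= !sum_indicator big_ord_recl /= addrC.
congr (_ + _).
  rewrite mcoeff_mxword_Xpow -natrM mulnb; congr (_%:R).
  rewrite /xword_at /= eqseq_cons eq_nseq_true.
  rewrite /walk_through /= eqSS -size_eq0 [(0 == _)%N]eq_sym.
  case: (b == L); case: (i == r); rewrite ?andbF //=.
  case: (size w) => [|m] /=; first by rewrite andbT [0%N == n]eq_sym [j == s]eq_sym.
  rewrite [_.+1 == n]eq_sym; case: (eqVneq s a) => [->|]; last by rewrite !andbF.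
  by rewrite [a == j]eq_sym /= andbT.
case: b; last by rewrite mul0r big1 // => l _; rewrite /xword_at /= andbF.
case: (eqVneq i a) => [->|ne_ia]; last first.
  rewrite andbF mul0r big1 // => l _.
  by rewrite walk_throughS ?ltn_ord // (negbTE ne_ia) /= !andbF.
rewrite /= mul1r; case: n IH => [|n] IH.
  apply/esym/big1 => l _.
  by rewrite eqSS (gtn_eqF (leq_ltn_trans (leq0n l) (ltn_ord l))).
rewrite IH; apply: eq_bigr => l _; congr (_%:R).
by rewrite eqSS /xword_at /= eqseq_cons eqxx walk_throughS ?ltn_ord // eqxx.
Qed.

Variables (p : ncpoly R) (d t : nat).

Lemma coef2_ncentry_walks i j : (0 < t)%N -> (t <= d)%N ->
  coef2 (ncentry pos p d i j) u t.-1 v =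
  \sum_(l < t) (walk_through r s l t i j)%:R * p (xword_at t l L).
Proof.
move=> t_gt0 t_le_d.
have coef_word m (w : m.-tuple bool) :
    (p w *: mxw w i j)@_(U_(u) *+ t.-1 + U_(v))%MM =
    \sum_(l < m) p w * [&& m == t, w == xword_at m l L :> seq bool
                                  & walk_through r s l m i j]%:R.
  by rewrite mcoeffZ mcoeff_mxword_Xpow_var size_tuple prednK // big_distrr.
rewrite /coef2 /ncentry raddf_sum (bigD1 (Ordinal (t_le_d : (t < d.+1)%N))) //=.
rewrite [X in _ + X]big1 ?addr0; last first.
  move=> m ne_mt; rewrite raddf_sum big1 // => w _.
  apply: etrans (coef_word _ w) _; apply: big1 => l _.
  rewrite (_ : (m == t :> nat) = false) ?mulr0 //.
  by apply: contraNF ne_mt => /eqP e; apply/eqP/val_inj.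
rewrite raddf_sum (eq_bigr _ (fun w _ => coef_word _ w)) /=.
under eq_bigr do rewrite eqxx /=.
rewrite exchange_big; apply: eq_bigr => l _.
by rewrite (@sum_tuple_indicator _ _ _ (xword_at t l L)) // size_xword_at.
Qed.

Lemma coef2_ncentry i j : (2 <= t)%N -> (t <= d)%N ->
  coef2 (ncentry pos p d i j) u t.-1 v =
  if (r == a) && (s == a)
  then ((i == a) && (j == a))%:R * \sum_(l < t) p (xword_at t l L)
  else [&& i == r, s == a & j == a]%:R * p (L :: nseq t.-1 true)
     + [&& i == a, r == a & j == s]%:R * p (rcons (nseq t.-1 true) L).
Proof.
move=> t_ge2 t_le_d; rewrite coef2_ncentry_walks //; last exact: ltnW.
case: ifP => [/andP [/eqP -> /eqP ->] | rs_nF].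
  rewrite big_distrr; apply: eq_bigr => l _; congr (_%:R * _).
  rewrite /walk_through eqxx.
  by case: (l == 0 :> nat); case: (l == t.-1 :> nat); rewrite ?andbT.
case: t t_ge2 t_le_d => [|[|t']] // _ _.
rewrite big_ord_recl big_ord_recr /= big1 ?add0r; last first.
  move=> l _; rewrite /walk_through /= /bump /= add1n.
  rewrite (_ : (l.+1 == t'.+1)%N = false); last by rewrite eqSS ltn_eqF.
  by move: rs_nF; case: (r == a); case: (s == a); rewrite //= ?andbF ?mul0r.
rewrite xword_at_last; congr (_%:R * _ + _%:R * _).
by rewrite /walk_through /bump /= ?add1n eqxx andbA.
Qed.

End OneOtherVariable.

Lemma coef2_ncentry_profile (p : ncpoly R) d t i j L r s :
  (2 <= t)%N -> (t <= d)%N -> pos (L, r, s) != u ->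
  coef2 (ncentry pos p d i j) u t.-1 (pos (L, r, s)) =
  coef_profile a (p (nseq t true)) (p (rcons (nseq t.-1 true) false))
    (p (false :: nseq t.-1 true)) (phi p t.-1 1) i j L r s.
Proof.
move=> t_ge2 t_le_d v_neq_u; rewrite coef2_ncentry // /coef_profile.
case: ifP => [/andP [/eqP er /eqP es] | _].
  case: L v_neq_u => [|_]; first by rewrite er es eqxx.
  by rewrite sum_xword_at_Y ?andbT // ltnW.
have t_eq : t = t.-1.+1 by rewrite prednK // ltnW.
case: L {v_neq_u} => //=; rewrite [in RHS]t_eq.
by rewrite -cats1 -[[:: true]]/(nseq 1 true) -nseqD addn1.
Qed.

End MatrixWords.

Section CoefficientProfile.
Variables (R : ringType) (k : nat) (pos : bool * 'I_k * 'I_k -> 'I_(2 * k ^ 2))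
  (g : 'I_(2 * k ^ 2) -> bool * 'I_k * 'I_k).
Hypotheses (posI : injective pos) (gK : cancel g pos).
Variables (d1 d2 d3 ph : R) (a : 'I_k) (c : 'I_k -> 'I_k -> 'I_(2 * k ^ 2) -> R).
Local Notation u := (pos (true, a, a)).
Hypothesis c_profile : forall i j L r s, pos (L, r, s) != u ->
  c i j (pos (L, r, s)) = coef_profile a d1 d2 d3 ph i j L r s.

Local Ltac simp_ind :=
  rewrite /= ?andbF ?andbT ?orbF ?mulr0n ?mulr1n ?mul0r ?mul1r ?add0r ?addr0.

Lemma isXentry_pos L r s : isXentry pos (pos (L, r, s)) = L.
Proof.
apply/existsP/idP => [[i /existsP [j /eqP /posI [e _ _]]]|hL]; first by rewrite -e.
by exists r; apply/existsP; exists s; rewrite hL.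
Qed.

Lemma isYoffdiag_pos L r s : isYoffdiag pos (pos (L, r, s)) = ~~ L && (r != s).
Proof.
apply/existsP/idP => [[i /existsP [j /andP [hij /eqP /posI e]]]|/andP [hL hrs]].
  by case: e => <- <- <-.
by exists r; apply/existsP; exists s; case: L hL => //= _; rewrite hrs eqxx.
Qed.

Lemma isYdiag_pos L r s : isYdiag pos (pos (L, r, s)) = ~~ L && (r == s).
Proof.
apply/existsP/idP => [[i /eqP /posI e]|/andP [hL /eqP ->]].
  by case: e => <- <- <-; rewrite eqxx.
by exists s; case: L hL => //= _; rewrite eqxx.
Qed.

Lemma eq_pos_u L r s : (pos (L, r, s) == u) = [&& L, r == a & s == a].
Proof. by rewrite (inj_eq posI) !xpair_eqE andbA; case: L. Qed.

Lemma coef_row_terms b : b != a ->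
  [/\ c a b (pos (true, a, b)) = d1, c a b (pos (false, a, b)) = d2 &
       forall v, v != u -> v != pos (true, a, b) -> v != pos (false, a, b) -> c a b v = 0].
Proof.
move=> b_neq_a; have b_neq_aF := negbTE b_neq_a; split.
- by rewrite c_profile ?eq_pos_u ?b_neq_aF ?andbF // /coef_profile !eqxx b_neq_aF; simp_ind.
- by rewrite c_profile ?eq_pos_u ?b_neq_aF ?andbF // /coef_profile !eqxx b_neq_aF; simp_ind.
move=> v; rewrite -(gK v); case: (g v) => [[L r] s] hu h1 h2.
rewrite c_profile // /coef_profile b_neq_aF !andbF /=; case: ifP => _; simp_ind; first done.
case: (eqVneq r a) => [er|_]; last by rewrite /= ?andbF; simp_ind.
case: (eqVneq b s) => [es|_]; last by rewrite /= ?andbF; simp_ind.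
by move: hu h1 h2; rewrite er -es; case: L; rewrite !eqxx.
Qed.

Lemma coef_col_terms b : b != a ->
  [/\ c b a (pos (true, b, a)) = d1, c b a (pos (false, b, a)) = d3 &
       forall v, v != u -> v != pos (true, b, a) -> v != pos (false, b, a) -> c b a v = 0].
Proof.
move=> b_neq_a; have b_neq_aF := negbTE b_neq_a; split.
- by rewrite c_profile ?eq_pos_u ?b_neq_aF // /coef_profile !eqxx b_neq_aF; simp_ind.
- by rewrite c_profile ?eq_pos_u ?b_neq_aF // /coef_profile !eqxx b_neq_aF; simp_ind.
move=> v; rewrite -(gK v); case: (g v) => [[L r] s] hu h1 h2.
rewrite c_profile // /coef_profile b_neq_aF /=.
case: ifP => _; first by rewrite ?andbF; simp_ind.
simp_ind.
case: (eqVneq s a) => [es|_]; last by rewrite /= ?andbF; simp_ind.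
case: (eqVneq b r) => [er|_]; last by rewrite /= ?andbF; simp_ind.
by move: hu h1 h2; rewrite es -er; case: L; rewrite !eqxx.
Qed.

Lemma nonzero_terms_classified i j v : v != u -> c i j v != 0 ->
  [|| isXentry pos v && (c i j v == d1),
      isYoffdiag pos v && ((c i j v == d2) || (c i j v == d3)) |
      isYdiag pos v && (c i j v == ph)].
Proof.
rewrite -(gK v); case: (g v) => [[L r] s] hu.
rewrite isXentry_pos isYoffdiag_pos isYdiag_pos c_profile // /coef_profile.
move: hu; rewrite eq_pos_u.
case: L => /=.
  case: (eqVneq s a) => [->|_]; rewrite ?andbT ?andbF.
    move=> /negbTE hr; rewrite hr /=; simp_ind.
    by case: (i == r); case: (j == a); simp_ind; rewrite ?eqxx.
  move=> _; simp_ind.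
  by case: (i == a); case: (r == a); case: (j == s); simp_ind; rewrite ?eqxx.
move=> _.
case: (eqVneq r a) => [->|hr]; case: (eqVneq s a) => [->|hs]; rewrite /= ?eqxx /=.
- by case: (i == a); case: (j == a); simp_ind; rewrite ?eqxx.
- rewrite ?andbF; simp_ind.
  by case: (i == a); case: (j == s); simp_ind; rewrite ?eqxx ?orbT.
- rewrite ?andbF; simp_ind; rewrite ?hr /=.
  by case: (i == r); case: (j == a); simp_ind; rewrite ?eqxx ?orbT.
- rewrite ?andbF; simp_ind; by rewrite eqxx.
Qed.

Definition X_row_col_term (x : bool * 'I_k) : 'I_k * 'I_k * 'I_(2 * k ^ 2) :=
  if x.1 then (x.2, a, pos (true, x.2, a)) else (a, x.2, pos (true, a, x.2)).

Lemma X_terms_d1E : d1 != 0 ->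
  [set z : 'I_k * 'I_k * 'I_(2 * k ^ 2) |
     [&& isXentry pos z.2, z.2 != u & c z.1.1 z.1.2 z.2 == d1]] =
  X_row_col_term @: setX [set: bool] [set~ a].
Proof.
move=> d1_nz; have hd1' : (0 == d1) = false by rewrite eq_sym (negbTE d1_nz).
apply/setP => [[[i j] v]]; rewrite -(gK v); case: (g v) => [[L r] s].
have -> : ((i, j, pos (L, r, s)) \in X_row_col_term @: setX [set: bool] [set~ a]) =
    L && ([&& i == r, s == a, j == a & r != a] || [&& i == a, r == a, j == s & s != a]).
  apply/imsetP/idP => [[[b x]] hx|].
    move: hx; rewrite !inE /= => hx.
    case: b => /= [[-> -> /posI [-> -> ->]] | [-> -> /posI [-> -> ->]]].
      by rewrite !eqxx hx.
    by rewrite !eqxx hx orbT.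
  case/andP => -> /orP [/and4P [/eqP -> /eqP -> /eqP -> hr]
                      | /and4P [/eqP -> /eqP -> /eqP -> hs]].
    by exists (true, r); rewrite // !inE.
  by exists (false, s); rewrite // !inE.
rewrite inE /= isXentry_pos eq_pos_u.
case: L => //=.
case: (eqVneq r a) => [->|hr]; case: (eqVneq s a) => [->|hs]; rewrite /= ?eqxx //=.
- by rewrite !andbF.
- rewrite c_profile ?eq_pos_u ?(negbTE hs) ?andbF // /coef_profile eqxx (negbTE hs) /=.
  by case: (i == a); case: (j == s); simp_ind; rewrite ?eqxx ?hd1'.
- rewrite c_profile ?eq_pos_u ?(negbTE hr) // /coef_profile eqxx (negbTE hr) /=.
  by case: (i == r); case: (j == a); simp_ind; rewrite ?eqxx ?hd1'.
- rewrite c_profile ?eq_pos_u ?(negbTE hr) // /coef_profile (negbTE hr) (negbTE hs) /=.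
  by simp_ind; rewrite ?hd1'.
Qed.

Lemma card_X_terms : d1 != 0 ->
  #|[set z : 'I_k * 'I_k * 'I_(2 * k ^ 2) |
     [&& isXentry pos z.2, z.2 != u & c z.1.1 z.1.2 z.2 == d1]]| = (2 * k - 2)%N.
Proof.
move=> d1_nz; rewrite X_terms_d1E // card_in_imset; last first.
  move=> [b x] [b' x']; rewrite !inE /= => hx hx'.
  case: b; case: b' => /=.
  - by move=> [->].
  - by move=> [e1 e2]; rewrite e1 eqxx in hx.
  - by move=> [e1 e2]; rewrite e2 eqxx in hx.
  - by case=> ->.
by rewrite cardsX cardsT card_bool cardsC1 card_ord -subn1 mulnBr muln1.
Qed.

Lemma card_Yoffdiag_d2_terms : d2 != d3 -> d2 != 0 ->
  #|[set z : 'I_k * 'I_k * 'I_(2 * k ^ 2) |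
     isYoffdiag pos z.2 && (c z.1.1 z.1.2 z.2 == d2)]| = k.-1.
Proof.
move=> n23 d2_nz; have hd2' : (0 == d2) = false by rewrite eq_sym (negbTE d2_nz).
have n32 : (d3 == d2) = false by rewrite eq_sym (negbTE n23).
pose h (x : 'I_k) := (a, x, pos (false, a, x)).
have -> : [set z : 'I_k * 'I_k * 'I_(2 * k ^ 2) |
    isYoffdiag pos z.2 && (c z.1.1 z.1.2 z.2 == d2)] = h @: [set~ a].
  apply/setP => [[[i j] v]]; rewrite -(gK v); case: (g v) => [[L r] s].
  have -> : ((i, j, pos (L, r, s)) \in h @: [set~ a]) =
      [&& ~~ L, i == a, r == a, j == s & s != a].
    apply/imsetP/idP => [[x hx [-> -> /posI [-> -> ->]]]|].
      by move: hx; rewrite !inE /= !eqxx => ->.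
    case/and5P => /negbTE -> /eqP -> /eqP -> /eqP -> hs.
    by exists s; rewrite // !inE.
  rewrite inE /= isYoffdiag_pos; case: L => //=.
  rewrite c_profile ?eq_pos_u // /coef_profile.
  case: (eqVneq r a) => [->|hr]; case: (eqVneq s a) => [->|hs]; rewrite /= ?eqxx //=.
  - by rewrite !andbF.
  - by case: (i == a); case: (j == s); simp_ind; rewrite ?eqxx ?hd2'.
  - by case: (i == r); case: (j == a); simp_ind; rewrite ?n32 ?hd2' ?andbF.
  - by simp_ind; rewrite ?hd2' ?andbF.
by rewrite card_imset ?cardsC1 ?card_ord // => x y [->].
Qed.

Lemma card_Yoffdiag_d3_terms : d2 != d3 -> d3 != 0 ->
  #|[set z : 'I_k * 'I_k * 'I_(2 * k ^ 2) |
     isYoffdiag pos z.2 && (c z.1.1 z.1.2 z.2 == d3)]| = k.-1.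
Proof.
move=> n23 d3_nz; have hd3' : (0 == d3) = false by rewrite eq_sym (negbTE d3_nz).
have n23' : (d2 == d3) = false by rewrite (negbTE n23).
pose h (x : 'I_k) := (x, a, pos (false, x, a)).
have -> : [set z : 'I_k * 'I_k * 'I_(2 * k ^ 2) |
    isYoffdiag pos z.2 && (c z.1.1 z.1.2 z.2 == d3)] = h @: [set~ a].
  apply/setP => [[[i j] v]]; rewrite -(gK v); case: (g v) => [[L r] s].
  have -> : ((i, j, pos (L, r, s)) \in h @: [set~ a]) =
      [&& ~~ L, i == r, s == a, j == a & r != a].
    apply/imsetP/idP => [[x hx [-> -> /posI [-> -> ->]]]|].
      by move: hx; rewrite !inE /= !eqxx => ->.
    case/and5P => /negbTE -> /eqP -> /eqP -> /eqP -> hr.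
    by exists r; rewrite // !inE.
  rewrite inE /= isYoffdiag_pos; case: L => //=.
  rewrite c_profile ?eq_pos_u // /coef_profile.
  case: (eqVneq r a) => [->|hr]; case: (eqVneq s a) => [->|hs]; rewrite /= ?eqxx //=.
  - by rewrite !andbF.
  - by case: (i == a); case: (j == s); simp_ind; rewrite ?n23' ?hd3' ?andbF.
  - by rewrite hr; case: (i == r); case: (j == a); simp_ind; rewrite ?eqxx ?hd3'.
  - by simp_ind; rewrite ?hd3' ?andbF.
by rewrite card_imset ?cardsC1 ?card_ord // => x y [->].
Qed.

Lemma card_Ydiag_terms : ph != 0 ->
  #|[set z : 'I_k * 'I_k * 'I_(2 * k ^ 2) |
     isYdiag pos z.2 && (c z.1.1 z.1.2 z.2 == ph)]| = 1%N.
Proof.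
move=> ph_nz; have hph' : (0 == ph) = false by rewrite eq_sym (negbTE ph_nz).
have -> : [set z : 'I_k * 'I_k * 'I_(2 * k ^ 2) |
    isYdiag pos z.2 && (c z.1.1 z.1.2 z.2 == ph)] = [set (a, a, pos (false, a, a))].
  apply/setP => [[[i j] v]]; rewrite -(gK v); case: (g v) => [[L r] s].
  rewrite in_set1 !xpair_eqE (inj_eq posI) !xpair_eqE inE /= isYdiag_pos.
  case: L => //=; first by rewrite !andbF.
  rewrite c_profile ?eq_pos_u // /coef_profile.
  case: (eqVneq r a) => [->|hr]; case: (eqVneq s a) => [->|hs]; rewrite /= ?eqxx //=.
  - by case: (i == a); case: (j == a); simp_ind; rewrite ?eqxx ?hph'.
  - by rewrite !andbF.
  - by rewrite (negbTE hr) !andbF.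
  - by simp_ind; rewrite ?hph' ?andbF.
by rewrite cards1.
Qed.

End CoefficientProfile.

Theorem lemma2p12 (R : realFieldType) (k : nat)
  (pos : bool * 'I_k * 'I_k -> 'I_(2 * k ^ 2))
  (p : ncpoly R) (d t : nat) (d1 d2 d3 : R) :
  (1 <= k)%N ->
  bijective pos ->
  ncdeg p d -> (1 < d)%N ->
  (2 <= t)%N ->
  p (nseq t true) = d1 ->
  p (rcons (nseq t.-1 true) false) = d2 ->
  p (false :: nseq t.-1 true) = d3 ->
  d1 != d2 -> d1 != d3 -> d2 != d3 ->
  forall a : 'I_k,
  let u := pos (true, a, a) in
  let c := fun (i j : 'I_k) (v : 'I_(2 * k ^ 2)) =>
             coef2 (ncentry pos p d i j) u t.-1 v in
  (d1 != 0 -> #|[set z : 'I_k * 'I_k * 'I_(2 * k ^ 2) |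
                 [&& isXentry pos z.2, z.2 != u & c z.1.1 z.1.2 z.2 == d1]]|
              = (2 * k - 2)%N) /\
  (d2 != 0 -> #|[set z : 'I_k * 'I_k * 'I_(2 * k ^ 2) |
                 isYoffdiag pos z.2 && (c z.1.1 z.1.2 z.2 == d2)]| = k.-1) /\
  (d3 != 0 -> #|[set z : 'I_k * 'I_k * 'I_(2 * k ^ 2) |
                 isYoffdiag pos z.2 && (c z.1.1 z.1.2 z.2 == d3)]| = k.-1) /\
  (phi p t.-1 1 != 0 -> #|[set z : 'I_k * 'I_k * 'I_(2 * k ^ 2) |
                 isYdiag pos z.2 && (c z.1.1 z.1.2 z.2 == phi p t.-1 1)]| = 1%N) /\
  (forall (i j : 'I_k) (v : 'I_(2 * k ^ 2)), v != u -> c i j v != 0 ->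
     [|| isXentry pos v && (c i j v == d1),
         isYoffdiag pos v && ((c i j v == d2) || (c i j v == d3)) |
         isYdiag pos v && (c i j v == phi p t.-1 1)]) /\
  (forall b : 'I_k, b != a ->
     [/\ c a b (pos (true, a, b)) = d1,
         c a b (pos (false, a, b)) = d2 &
         (forall v, v != u -> v != pos (true, a, b) -> v != pos (false, a, b) ->
            c a b v = 0)] /\
     [/\ c b a (pos (true, b, a)) = d1,
         c b a (pos (false, b, a)) = d3 &
         (forall v, v != u -> v != pos (true, b, a) -> v != pos (false, b, a) ->
            c b a v = 0)]).
Proof.
move=> _ [g posK gK] [deg_p _] _ t_ge2 d1E d2E d3E n12 _ n23 a u c.
have posI := can_inj posK.
have t_le_d : (t <= d)%N.
  rewrite leqNgt; apply: contra n12 => lt_dt.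
  by rewrite -d1E -d2E !deg_p ?size_rcons ?size_nseq ?prednK // ltnW.
have c_profile i j L r s : pos (L, r, s) != u ->
    c i j (pos (L, r, s)) = coef_profile a d1 d2 d3 (phi p t.-1 1) i j L r s.
  by move=> v_neq_u; rewrite -d1E -d2E -d3E /c (coef2_ncentry_profile posI).
split; first exact: (card_X_terms posI gK c_profile).
split; first exact: (card_Yoffdiag_d2_terms posI gK c_profile n23).
split; first exact: (card_Yoffdiag_d3_terms posI gK c_profile n23).
split; first exact: (card_Ydiag_terms posI gK c_profile).
split; first exact: (nonzero_terms_classified posI gK c_profile).
move=> b b_neq_a; split; first exact: (coef_row_terms posI gK c_profile).
exact: (coef_col_terms posI gK c_profile).
Qed.
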